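(* For $n\in\mathbb{Z}^+$ we have $$\begin{aligned}&t(1,4,7;n)=2N(1,4,7;2n+3)&&\text{for } n\equiv 1\pmod 4,\\ &t(1,7,12;n)=2N(1,7,12;2n+5)&&\text{for } n\equiv 3\pmod 4,\\ &t(1,7,28;n)=2N(1,7,28;2n+9)&&\text{for } n\equiv 1\pmod 4,\\ &t(3,4,21;n)=2N(3,4,21;2n+7)&&\text{for } n\equiv 1\pmod 4,\\ &t(3,21,28;n)=2N(3,21,28;2n+13)&&\text{for } n\equiv 1\pmod 4.\end{aligned}$$
   Context: $\mathbb{Z}^+$ is the set of positive integers. For $a,b,c\in\mathbb{Z}^+$ and nonnegative integer $n$, $N(a,b,c;n)$ denotes the number of triples $(x,y,z)\in\mathbb{Z}^3$ with $n=ax^2+by^2+cz^2$, and $t(a,b,c;n)$ denotes the number of triples $(x,y,z)\in\mathbb{Z}^3$ with $n=a\frac{x(x+1)}2+b\frac{y(y+1)}2+c\frac{z(z+1)}2$. *)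

From mathcomp Require Import all_boot all_order all_algebra.
Import GRing.Theory Num.Theory.
Local Open Scope ring_scope.

Definition zbox (B : nat) : seq int := [seq (Posz i - Posz B) | i <- iota 0 (2 * B).+1].

Definition ztriples (B : nat) : seq (int * int * int) :=
  flatten [seq flatten [seq [seq (x, y, z) | z <- zbox B] | y <- zbox B] | x <- zbox B].

(* Every solution satisfies |x|,|y|,|z| <= n (since a,b,c >= 1 and x^2 >= |x|),
   so counting over the box [-(n+1), n+1]^3 counts all solutions in Z^3. *)
Definition Nrep (a b c n : nat) : nat :=
  size [seq v <- (ztriples n.+1)
       | let: (x, y, z) := v in
         a%:Z * x ^+ 2 + b%:Z * y ^+ 2 + c%:Z * z ^+ 2 == n%:Z].

(* Number of (x,y,z) in Z^3 with a x(x+1)/2 + b y(y+1)/2 + c z(z+1)/2 = n,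
   written (to stay in Z) as  a x(x+1) + b y(y+1) + c z(z+1) = 2n.
   Every solution has x(x+1)/2 <= n, and x(x+1)/2 >= |x| - 1 for all x in Z,
   hence |x| <= n+1, so the box [-(n+1), n+1]^3 contains all solutions. *)
Definition trep (a b c n : nat) : nat :=
  size [seq v <- (ztriples n.+1)
       | let: (x, y, z) := v in
         a%:Z * (x * (x + 1)) + b%:Z * (y * (y + 1)) + c%:Z * (z * (z + 1))
           == (2 * n)%:Z].

From Stdlib Require Import BinInt.
From mathcomp Require Import all_boot all_order all_algebra.
From mathcomp Require Import ring zify ssrZ.
(* Write Q = a x^2 + b y^2 + c z^2 and 4m = 8n + a + b + c.  Since
   4 (a x(x+1) + b y(y+1) + c z(z+1)) + a + b + c = Q(2x+1, 2y+1, 2z+1),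
   t(a,b,c;n) counts the odd vectors u with Q(u) = 4m.  For each of the five forms
   there is a finite family of integer matrices A with Q(Av) = 64 Q(v) and
   C = 128 A^-1 integral, such that every v with Q(v) = m is sent by exactly two A
   of the family to 4 times an odd vector, while every odd u with Q(u) = 4m is sent
   by exactly one C into 32 Z^3.  Since v |-> Av/4 and u |-> Cu/32 are mutually
   inverse, double counting these incidences gives 2 N(a,b,c;m) = t(a,b,c;n).  The
   two counting conditions only depend on v mod 8 and u mod 32, so they reduce to a
   finite computation. *)

Set Implicit Arguments.
Unset Strict Implicit.
Unset Printing Implicit Defensive.
Import GRing.Theory Num.Theory.
Local Open Scope ring_scope.

Lemma count_le_cancel (X Y : eqType) (s : seq X) (t : seq Y) (p : pred X) (q : pred Y)
    (f : X -> Y) (g : Y -> X) :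
  uniq s -> {in s, forall x, p x -> [/\ f x \in t, q (f x) & g (f x) = x]} ->
  (count p s <= count q t)%N.
Proof.
move=> uniq_s fP; rewrite -!size_filter -(size_map f).
apply: uniq_leq_size => [|y /mapP[x]]; last first.
  by rewrite mem_filter => /andP[px sx] ->; have [tfx qfx _] := fP x sx px; rewrite mem_filter qfx.
rewrite map_inj_in_uniq ?filter_uniq // => x1 x2.
rewrite !mem_filter => /andP[px1 sx1] /andP[px2 sx2] /(congr1 g).
by have [_ _ ->] := fP x1 sx1 px1; have [_ _ ->] := fP x2 sx2 px2.
Qed.

Lemma count_bij (X Y : eqType) (s : seq X) (t : seq Y) (p : pred X) (q : pred Y)
    (f : X -> Y) (g : Y -> X) :
  uniq s -> uniq t ->
  {in s, forall x, p x -> [/\ f x \in t, q (f x) & g (f x) = x]} ->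
  {in t, forall y, q y -> [/\ g y \in s, p (g y) & f (g y) = y]} ->
  count p s = count q t.
Proof.
by move=> us ut fP gP; apply/eqP; rewrite eqn_leq (count_le_cancel us fP) (count_le_cancel ut gP).
Qed.

Lemma sum_count_exchange (I X : eqType) (F : seq I) (s : seq X) (P : I -> pred X) :
  (\sum_(i <- F) count (P i) s = \sum_(x <- s) count (P^~ x) F)%N.
Proof.
rewrite (eq_bigr (fun i => \sum_(x <- s) (if P i x then 1 else 0))%N) => [|i _].
  by rewrite exchange_big; apply: eq_bigr => x _; rewrite -sum1_count [RHS]big_mkcond.
by rewrite -sum1_count [LHS]big_mkcond.
Qed.

Lemma sum_const_in (X : eqType) (s : seq X) (f : X -> nat) (k : nat) :
  {in s, forall x, f x = k} -> (\sum_(x <- s) f x = k * size s)%N.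
Proof.
by move=> fk; rewrite (eq_big_seq (fun=> k)) // big_const_seq count_predT iter_addn_0 mulnC.
Qed.

Lemma double_count (I X Y : eqType) (F : seq I) (S : seq X) (T : seq Y)
    (P : I -> pred X) (R : I -> pred Y) (f : I -> X -> Y) (g : I -> Y -> X) (k l : nat) :
  uniq S -> uniq T ->
  {in S, forall x, count (P^~ x) F = k} -> {in T, forall y, count (R^~ y) F = l} ->
  (forall i, i \in F -> {in S, forall x, P i x -> [/\ f i x \in T, R i (f i x) & g i (f i x) = x]}) ->
  (forall i, i \in F -> {in T, forall y, R i y -> [/\ g i y \in S, P i (g i y) & f i (g i y) = y]}) ->
  (k * size S = l * size T)%N.
Proof.
move=> uS uT cP cR fP gP.
rewrite -(sum_const_in cP) -(sum_const_in cR).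
rewrite -(sum_count_exchange _ S) -(sum_count_exchange _ T) big_seq_cond [RHS]big_seq_cond.
by apply: eq_bigr => i /andP[iF _]; exact: count_bij uS uT (fP i iF) (gP i iF).
Qed.

Lemma mem_zbox (B : nat) (c : int) : (c \in zbox B) = (`|c| <= B%:Z).
Proof.
apply/mapP/idP => [[i]|cB]; first by rewrite mem_iota => /andP[_ iB] ->; lia.
by exists (absz (c + B%:Z)); [rewrite mem_iota; lia | lia].
Qed.

Lemma mem_ztriples (B : nat) (x y z : int) :
  ((x, y, z) \in ztriples B) = [&& `|x| <= B%:Z, `|y| <= B%:Z & `|z| <= B%:Z].
Proof.
apply/flatten_mapP/idP => [[x' x'B /allpairsP[[y' z'] [/= y'B z'B [-> -> ->]]]]|].
  by rewrite -!mem_zbox x'B y'B z'B.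
by case/and3P; rewrite -!mem_zbox => xB yB zB; exists x => //; apply/allpairsP; exists (y, z).
Qed.

Lemma uniq_zbox (B : nat) : uniq (zbox B).
Proof. by rewrite map_inj_uniq ?iota_uniq // => i j /addIr []. Qed.

Lemma uniq_ztriples (B : nat) : uniq (ztriples B).
Proof.
have -> : ztriples B =
    [seq (x, yz.1, yz.2) | x <- zbox B, yz <- [seq (y, z) | y <- zbox B, z <- zbox B]].
  by congr flatten; apply: eq_map => x; rewrite map_allpairs.
rewrite allpairs_uniq ?allpairs_uniq ?uniq_zbox //.
  by move=> [? ?] [? ?] _ _ [-> ->].
by move=> [x [y z]] [x' [y' z']] _ _ /= [-> -> ->].
Qed.

Definition map3 (T U : Type) (f : T -> U) (v : T * T * T) : U * U * U :=
  let: (v1, v2, v3) := v in (f v1, f v2, f v3).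

Lemma map3_inj (T U : Type) (f : T -> U) : injective f -> injective (map3 f).
Proof. by move=> f_inj [[? ?] ?] [[? ?] ?] [/f_inj -> /f_inj -> /f_inj ->]. Qed.

Section Vectors.

Variable R : comNzRingType.

Definition vec3 := (R * R * R)%type.
Definition mat3 := (vec3 * vec3 * vec3)%type.

Definition dotv (u v : vec3) : R :=
  let: (u1, u2, u3) := u in let: (v1, v2, v3) := v in u1 * v1 + u2 * v2 + u3 * v3.

Definition mulmv (M : mat3) (v : vec3) : vec3 :=
  let: (r1, r2, r3) := M in (dotv r1 v, dotv r2 v, dotv r3 v).

Definition trm (M : mat3) : mat3 :=
  let: ((a11, a12, a13), (a21, a22, a23), (a31, a32, a33)) := M in
  ((a11, a21, a31), (a12, a22, a32), (a13, a23, a33)).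

Definition mulmm (M N : mat3) : mat3 :=
  let: (r1, r2, r3) := M in (mulmv (trm N) r1, mulmv (trm N) r2, mulmv (trm N) r3).

Definition diagm (a b c : R) : mat3 := ((a, 0, 0), (0, b, 0), (0, 0, c)).

Definition scalev (k : R) (v : vec3) : vec3 :=
  let: (v1, v2, v3) := v in (k * v1, k * v2, k * v3).

Definition qform (a b c : R) (v : vec3) : R :=
  let: (x, y, z) := v in a * x ^+ 2 + b * y ^+ 2 + c * z ^+ 2.

Definition oddv (t : vec3) : vec3 :=
  let: (t1, t2, t3) := t in (2 * t1 + 1, 2 * t2 + 1, 2 * t3 + 1).

Lemma mulmv_mulmm (M N : mat3) (v : vec3) : mulmv (mulmm M N) v = mulmv M (mulmv N v).
Proof.
case: M N v => [[[[? ?] ?] [[? ?] ?]] [[? ?] ?]] [[[[? ?] ?] [[? ?] ?]] [[? ?] ?]] [[? ?] ?] /=.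
by congr (_, _, _); ring.
Qed.

Lemma dotv_mulmv (M : mat3) (u v : vec3) : dotv (mulmv M u) v = dotv u (mulmv (trm M) v).
Proof. by case: M u v => [[[[? ?] ?] [[? ?] ?]] [[? ?] ?]] [[? ?] ?] [[? ?] ?] /=; ring. Qed.

Lemma qform_dotv (a b c : R) (v : vec3) : qform a b c v = dotv v (mulmv (diagm a b c) v).
Proof. by case: v => [[? ?] ?] /=; ring. Qed.

Lemma dotv_diagmM (k a b c : R) (v : vec3) :
  dotv v (mulmv (diagm (k * a) (k * b) (k * c)) v) = k * qform a b c v.
Proof. by case: v => [[? ?] ?] /=; ring. Qed.

Lemma qform_similitude (a b c k : R) (A : mat3) :
  mulmm (mulmm (trm A) (diagm a b c)) A = diagm (k * a) (k * b) (k * c) ->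
  forall v, qform a b c (mulmv A v) = k * qform a b c v.
Proof. by move=> gram v; rewrite qform_dotv dotv_mulmv -!mulmv_mulmm gram dotv_diagmM. Qed.

Lemma mulmv_scalar (k : R) (v : vec3) : mulmv (diagm k k k) v = scalev k v.
Proof. by case: v => [[? ?] ?] /=; congr (_, _, _); ring. Qed.

Lemma mulmv_scalev (M : mat3) (k : R) (v : vec3) : mulmv M (scalev k v) = scalev k (mulmv M v).
Proof. by case: M v => [[[[? ?] ?] [[? ?] ?]] [[? ?] ?]] [[? ?] ?] /=; congr (_, _, _); ring. Qed.

Lemma qform_scalev (a b c k : R) (v : vec3) : qform a b c (scalev k v) = k ^+ 2 * qform a b c v.
Proof. by case: v => [[? ?] ?] /=; ring. Qed.

Lemma scalevA (k l : R) (v : vec3) : scalev k (scalev l v) = scalev (k * l) v.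
Proof. by case: v => [[? ?] ?] /=; congr (_, _, _); ring. Qed.

Definition similitude_pair (a b c : R) (AC : mat3 * mat3) : bool :=
  let: (A, C) := AC in
  [&& mulmm (mulmm (trm A) (diagm a b c)) A == diagm (64 * a) (64 * b) (64 * c),
      mulmm C A == diagm 128 128 128 & mulmm A C == diagm 128 128 128].

Definition ascends (red : R -> R) (A : mat3) (x : vec3) : bool :=
  map3 red (mulmv A x) == (4, 4, 4).

Definition descends (red : R -> R) (C : mat3) (t : vec3) : bool :=
  map3 red (mulmv C (oddv t)) == (0, 0, 0).

(* The reductions modulo 8 and 32 are parameters so that a certificate over [int],
   whose unary representation makes evaluation infeasible, can be checked over the
   binary integers [Z] (see [certificate_map] and [certificate_Z]). *)
Definition certificate (red8 red32 : R -> R) (a b c r : R) (fam : seq (mat3 * mat3))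
    (box8 box16 : seq vec3) : bool :=
  [&& all (similitude_pair a b c) fam,
      all (fun x => (red8 (qform a b c x) != r)
                    || (count (fun AC => ascends red8 AC.1 x) fam == 2)%N) box8
    & all (fun t => (red32 (qform a b c (oddv t)) != red32 (4 * r))
                    || (count (fun AC => descends red32 AC.2 t) fam == 1)%N) box16].

End Vectors.

Section RingMorphism.

Variables (R S : comNzRingType) (f : {rmorphism R -> S}).

Definition mapm (M : mat3 R) : mat3 S := map3 (map3 f) M.

Lemma map3_mulmv (M : mat3 R) (v : vec3 R) : map3 f (mulmv M v) = mulmv (mapm M) (map3 f v).
Proof.
by case: M v => [[[[? ?] ?] [[? ?] ?]] [[? ?] ?]] [[? ?] ?] /=; rewrite !rmorphD !rmorphM.
Qed.

Lemma mapm_mulmm (M N : mat3 R) : mapm (mulmm M N) = mulmm (mapm M) (mapm N).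
Proof.
case: M N => [[[[? ?] ?] [[? ?] ?]] [[? ?] ?]] [[[[? ?] ?] [[? ?] ?]] [[? ?] ?]] /=.
by rewrite !rmorphD !rmorphM.
Qed.

Lemma mapm_trm (M : mat3 R) : mapm (trm M) = trm (mapm M).
Proof. by case: M => [[[[? ?] ?] [[? ?] ?]] [[? ?] ?]]. Qed.

Lemma mapm_diagm (a b c : R) : mapm (diagm a b c) = diagm (f a) (f b) (f c).
Proof. by rewrite /= rmorph0. Qed.

Lemma rmorph_qform (a b c : R) (v : vec3 R) :
  f (qform a b c v) = qform (f a) (f b) (f c) (map3 f v).
Proof. by case: v => [[? ?] ?] /=; rewrite !rmorphD !rmorphM ?rmorphXn. Qed.

Lemma map3_oddv (t : vec3 R) : map3 f (oddv t) = oddv (map3 f t).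
Proof. by case: t => [[? ?] ?] /=; rewrite !rmorphD !rmorphM !rmorph_nat rmorph1. Qed.

Hypothesis f_inj : injective f.

Lemma mapm_inj : injective mapm.
Proof. exact/map3_inj/map3_inj. Qed.

Lemma similitude_pair_map (a b c : R) (AC : mat3 R * mat3 R) :
  similitude_pair a b c AC = similitude_pair (f a) (f b) (f c) (mapm AC.1, mapm AC.2).
Proof.
case: AC => A C /=; rewrite -!(inj_eq mapm_inj).
by rewrite !mapm_mulmm !mapm_trm !mapm_diagm !rmorphM !rmorph_nat.
Qed.

Lemma map3_morph (red : R -> R) (red' : S -> S) (v : vec3 R) :
  {morph f : y / red y >-> red' y} -> map3 red' (map3 f v) = map3 f (map3 red v).
Proof. by move=> red_f; case: v => [[? ?] ?] /=; rewrite !red_f. Qed.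

Lemma ascends_map (red : R -> R) (red' : S -> S) (A : mat3 R) (x : vec3 R) :
  {morph f : y / red y >-> red' y} -> ascends red A x = ascends red' (mapm A) (map3 f x).
Proof.
move=> red_f; rewrite /ascends -map3_mulmv (map3_morph _ red_f).
by rewrite -(inj_eq (map3_inj f_inj)) /= rmorph_nat.
Qed.

Lemma descends_map (red : R -> R) (red' : S -> S) (C : mat3 R) (t : vec3 R) :
  {morph f : y / red y >-> red' y} -> descends red C t = descends red' (mapm C) (map3 f t).
Proof.
move=> red_f; rewrite /descends -map3_oddv -map3_mulmv (map3_morph _ red_f).
by rewrite -(inj_eq (map3_inj f_inj)) /= rmorph0.
Qed.

Lemma certificate_map (red8 red32 : R -> R) (red8' red32' : S -> S) (a b c r : R)
    (fam : seq (mat3 R * mat3 R)) (box8 box16 : seq (vec3 R)) :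
  {morph f : y / red8 y >-> red8' y} -> {morph f : y / red32 y >-> red32' y} ->
  certificate red8 red32 a b c r fam box8 box16 =
  certificate red8' red32' (f a) (f b) (f c) (f r) [seq (mapm AC.1, mapm AC.2) | AC <- fam]
    (map (map3 f) box8) (map (map3 f) box16).
Proof.
move=> red8_f red32_f; rewrite /certificate !all_map.
congr [&& _, _ & _].
- exact/eq_all/similitude_pair_map.
- apply: eq_all => x /=; rewrite count_map.
  congr orb; first by rewrite -rmorph_qform -red8_f (inj_eq f_inj).
  by congr (_ == _); apply: eq_count => AC; exact: ascends_map.
- apply: eq_all => t /=; rewrite count_map.
  congr orb.
    by rewrite -map3_oddv -rmorph_qform -(rmorph_nat f 4) -rmorphM -!red32_f (inj_eq f_inj).
  by congr (_ == _); apply: eq_count => AC; exact: descends_map.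
Qed.

End RingMorphism.

Definition vmod (d : int) : vec3 int -> vec3 int := map3 (modz^~ d).
Definition vdiv (d : int) : vec3 int -> vec3 int := map3 (divz^~ d).

Lemma dvdz_modzB (d x : int) : (d %| (x %% d)%Z - x)%Z.
Proof. by apply/dvdzP; exists (- (x %/ d)%Z); rewrite {2}(divz_eq x d); ring. Qed.

Lemma dotv_vmod (d : int) (u v : vec3 int) : (dotv u (vmod d v) = dotv u v %[mod d])%Z.
Proof.
case: u v => [[u1 u2] u3] [[v1 v2] v3] /=; apply/eqP; rewrite eqz_mod_dvd.
have -> : u1 * (v1 %% d)%Z + u2 * (v2 %% d)%Z + u3 * (v3 %% d)%Z - (u1 * v1 + u2 * v2 + u3 * v3)
  = u1 * ((v1 %% d)%Z - v1) + u2 * ((v2 %% d)%Z - v2) + u3 * ((v3 %% d)%Z - v3) by ring.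
by rewrite !rpredD ?dvdz_mull ?dvdz_modzB.
Qed.

Lemma mulmv_vmod (d : int) (M : mat3 int) (v : vec3 int) :
  vmod d (mulmv M (vmod d v)) = vmod d (mulmv M v).
Proof. by case: M => [[r1 r2] r3] /=; rewrite !dotv_vmod. Qed.

Lemma qform_vmod (d a b c : int) (v : vec3 int) :
  (qform a b c (vmod d v) = qform a b c v %[mod d])%Z.
Proof.
case: v => [[x y] z] /=; apply/eqP; rewrite eqz_mod_dvd.
have -> : a * (x %% d)%Z ^+ 2 + b * (y %% d)%Z ^+ 2 + c * (z %% d)%Z ^+ 2
          - (a * x ^+ 2 + b * y ^+ 2 + c * z ^+ 2)
  = a * ((x %% d)%Z + x) * ((x %% d)%Z - x) + b * ((y %% d)%Z + y) * ((y %% d)%Z - y)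
    + c * ((z %% d)%Z + z) * ((z %% d)%Z - z) by ring.
by rewrite !rpredD ?dvdz_mull ?dvdz_modzB.
Qed.

Lemma vmod_oddv (t : vec3 int) : vmod 32 (oddv (vmod 16 t)) = vmod 32 (oddv t).
Proof.
have oddP (s : int) : ((2 * (s %% 16)%Z + 1) %% 32)%Z = ((2 * s + 1) %% 32)%Z.
  apply/eqP; rewrite eqz_mod_dvd (_ : _ - _ = 2 * ((s %% 16)%Z - s)); last by ring.
  by rewrite (_ : 32 = 2 * 16) // dvdz_mul ?dvdz_modzB.
by case: t => [[t1 t2] t3] /=; rewrite !oddP.
Qed.

Definition residues (d : nat) : seq (vec3 int) :=
  let r := [seq Posz i | i <- iota 0 d] in flatten [seq [seq (x, y, z) | y <- r, z <- r] | x <- r].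

Lemma vmod_mem_residues (d : nat) (v : vec3 int) : (0 < d)%N -> vmod d%:Z v \in residues d.
Proof.
move=> d_gt0; have mem_r (s : int) : (s %% d%:Z)%Z \in [seq Posz i | i <- iota 0 d].
  have s_ge0 : 0 <= (s %% d%:Z)%Z by apply: modz_ge0; lia.
  have s_lt : (s %% d%:Z)%Z < d%:Z by apply: ltz_pmod; lia.
  by apply/mapP; exists `|(s %% d%:Z)%Z|%N; [rewrite mem_iota | ]; lia.
case: v => [[x y] z]; apply/flatten_mapP; exists (x %% d%:Z)%Z; first exact: mem_r.
by apply/allpairsP; exists ((y %% d%:Z)%Z, (z %% d%:Z)%Z); rewrite !mem_r.
Qed.

Lemma vmod_scalev4_oddv (t : vec3 int) : vmod 8 (scalev 4 (oddv t)) = (4, 4, 4).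
Proof.
have four_odd (s : int) : ((4 * (2 * s + 1)) %% 8)%Z = 4.
  by rewrite (_ : _ * _ = s * 8 + 4) ?modzMDl; last ring.
by case: t => [[? ?] ?] /=; rewrite !four_odd.
Qed.

Lemma vdiv_scalev4_oddv (t : vec3 int) : vdiv 8 (scalev 4 (oddv t)) = t.
Proof.
have four_odd (s : int) : ((4 * (2 * s + 1)) %/ 8)%Z = s.
  by rewrite (_ : _ * _ = s * 8 + 4) ?divzMDl ?divz_small ?addr0; last ring.
by case: t => [[? ?] ?] /=; rewrite !four_odd.
Qed.

Lemma scalev4_oddv_vdiv8 (v : vec3 int) : vmod 8 v = (4, 4, 4) -> v = scalev 4 (oddv (vdiv 8 v)).
Proof.
have four_odd (s : int) : (s %% 8)%Z = 4 -> s = 4 * (2 * (s %/ 8)%Z + 1).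
  by move=> s4; rewrite {1}(divz_eq s 8) s4; ring.
by case: v => [[? ?] ?] /= [/four_odd {1}-> /four_odd {1}-> /four_odd {1}->].
Qed.

Lemma vmod_scalev (d : int) (v : vec3 int) : vmod d (scalev d v) = (0, 0, 0).
Proof. by case: v => [[? ?] ?] /=; rewrite !modzMr. Qed.

Lemma scalevK (d : int) : d != 0 -> cancel (scalev d) (vdiv d).
Proof. by move=> d0 [[? ?] ?] /=; rewrite !mulKz. Qed.

Lemma vdivK (d : int) (v : vec3 int) : vmod d v = (0, 0, 0) -> scalev d (vdiv d v) = v.
Proof.
by case: v => [[? ?] ?] /= [/dvdz_mod0P ? /dvdz_mod0P ? /dvdz_mod0P ?]; rewrite !(mulrC d) !divzK.
Qed.

Lemma scalev_inj (k : int) : k != 0 -> injective (scalev k).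
Proof. by move=> k0 [[? ?] ?] [[? ?] ?] [/(mulfI k0) -> /(mulfI k0) -> /(mulfI k0) ->]. Qed.

Definition ascend (A : mat3 int) (x : vec3 int) : vec3 int := vdiv 8 (mulmv A x).
Definition descend (C : mat3 int) (t : vec3 int) : vec3 int := vdiv 32 (mulmv C (oddv t)).

Section SimilitudePair.

Variables (a b c : int) (A C : mat3 int).
Hypothesis qform_A : forall v, qform a b c (mulmv A v) = 64 * qform a b c v.
Hypothesis CA : forall v, mulmv C (mulmv A v) = scalev 128 v.
Hypothesis AC : forall v, mulmv A (mulmv C v) = scalev 128 v.

Lemma ascend_spec (x : vec3 int) : ascends (modz^~ 8) A x ->
  [/\ qform a b c (oddv (ascend A x)) = 4 * qform a b c x, descends (modz^~ 32) C (ascend A x)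
    & descend C (ascend A x) = x].
Proof.
move=> /eqP /scalev4_oddv_vdiv8 Ax; rewrite /ascend.
have C_odd : mulmv C (oddv (vdiv 8 (mulmv A x))) = scalev 32 x.
  by apply: (@scalev_inj 4) => //; rewrite -mulmv_scalev -Ax CA scalevA.
split; last by rewrite /descend C_odd scalevK.
- apply: (mulfI (_ : 4 ^+ 2 != 0)) => //.
  by rewrite -qform_scalev -Ax qform_A mulrA.
- by rewrite /descends C_odd -/(vmod 32 _) vmod_scalev.
Qed.

Lemma descend_spec (t : vec3 int) : descends (modz^~ 32) C t ->
  [/\ 4 * qform a b c (descend C t) = qform a b c (oddv t), ascends (modz^~ 8) A (descend C t)
    & ascend A (descend C t) = t].
Proof.
move=> /eqP /vdivK C_odd; rewrite /descend.
have Ax : mulmv A (vdiv 32 (mulmv C (oddv t))) = scalev 4 (oddv t).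
  by apply: (@scalev_inj 32) => //; rewrite -mulmv_scalev C_odd AC scalevA.
split; last by rewrite /ascend Ax vdiv_scalev4_oddv.
- apply: (mulfI (_ : 4 ^+ 2 != 0)) => //.
  by rewrite -qform_scalev -Ax qform_A mulrA.
- by rewrite /ascends Ax -/(vmod 8 _) vmod_scalev4_oddv.
Qed.

End SimilitudePair.

Lemma ascends_vmod (A : mat3 int) (x : vec3 int) :
  ascends (modz^~ 8) A (vmod 8 x) = ascends (modz^~ 8) A x.
Proof. by rewrite /ascends; have := mulmv_vmod 8 A x; rewrite /vmod => ->. Qed.

Lemma descends_vmod (C : mat3 int) (t : vec3 int) :
  descends (modz^~ 32) C (vmod 16 t) = descends (modz^~ 32) C t.
Proof.
have reduce : vmod 32 (mulmv C (oddv (vmod 16 t))) = vmod 32 (mulmv C (oddv t)).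
  by rewrite -mulmv_vmod vmod_oddv mulmv_vmod.
by move: reduce; rewrite /descends /vmod => ->.
Qed.

Section Representations.

Variables (a b c : nat).
Local Notation Q := (qform a%:Z b%:Z c%:Z).

Lemma NrepE (m : nat) : Nrep a b c m = size [seq x <- ztriples m.+1 | Q x == m%:Z].
Proof. by congr size; apply: eq_filter => -[[x y] z]. Qed.

Lemma qform_oddv (t : vec3 int) :
  Q (oddv t) = 4 * (a%:Z * (t.1.1 * (t.1.1 + 1)) + b%:Z * (t.1.2 * (t.1.2 + 1))
                    + c%:Z * (t.2 * (t.2 + 1))) + (a + b + c)%N%:Z.
Proof. by case: t => [[? ?] ?] /=; rewrite !PoszD; ring. Qed.

Lemma trepE (n m : nat) : (4 * m = 8 * n + a + b + c)%N ->
  trep a b c n = size [seq t <- ztriples n.+1 | Q (oddv t) == (4 * m)%N%:Z].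
Proof.
move=> mE; congr size; apply: eq_filter => -[[x y] z].
by rewrite qform_oddv mE /=; apply/eqP/eqP; lia.
Qed.

Hypotheses (a_gt0 : (0 < a)%N) (b_gt0 : (0 < b)%N) (c_gt0 : (0 < c)%N).

Lemma mem_reps (m : nat) (x : vec3 int) :
  (x \in [seq v <- ztriples m.+1 | Q v == m%:Z]) = (Q x == m%:Z).
Proof.
rewrite mem_filter; apply: andb_idr; case: x => [[x y] z] /= /eqP Qx.
by rewrite mem_ztriples; apply/and3P; split; nia.
Qed.

Lemma mem_odd_reps (n m : nat) (t : vec3 int) : (4 * m = 8 * n + a + b + c)%N ->
  (t \in [seq u <- ztriples n.+1 | Q (oddv u) == (4 * m)%N%:Z]) = (Q (oddv t) == (4 * m)%N%:Z).
Proof.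
move=> mE; rewrite mem_filter; apply: andb_idr; rewrite qform_oddv mE => /eqP.
case: t => [[x y] z] /= tE; rewrite mem_ztriples.
have [x_ge0 y_ge0 z_ge0] : [/\ 0 <= x * (x + 1), 0 <= y * (y + 1) & 0 <= z * (z + 1)] by split; nia.
by apply/and3P; split; nia.
Qed.

End Representations.

Definition certified (a b c r : nat) (fam : seq (mat3 int * mat3 int)) : bool :=
  certificate (modz^~ 8) (modz^~ 32) a%:Z b%:Z c%:Z r%:Z fam (residues 8) (residues 16).

Section Transfer.

Variables (a b c r : nat) (fam : seq (mat3 int * mat3 int)).
Hypotheses (a_gt0 : (0 < a)%N) (b_gt0 : (0 < b)%N) (c_gt0 : (0 < c)%N).
Hypothesis cert : certified a b c r fam.
Local Notation Q := (qform a%:Z b%:Z c%:Z).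

Lemma fam_similitude (AC : mat3 int * mat3 int) : AC \in fam ->
  [/\ forall v, Q (mulmv AC.1 v) = 64 * Q v,
      forall v, mulmv AC.2 (mulmv AC.1 v) = scalev 128 v
    & forall v, mulmv AC.1 (mulmv AC.2 v) = scalev 128 v].
Proof.
case/and3P: cert => /allP sim _ _ /sim; case: AC => A C /= /and3P[/eqP gram /eqP CA /eqP AC].
by split=> v; rewrite ?(qform_similitude gram) // -mulmv_mulmm ?CA ?AC mulmv_scalar.
Qed.

Lemma count_ascends (x : vec3 int) : (Q x %% 8)%Z = r%:Z ->
  count (fun AC => ascends (modz^~ 8) AC.1 x) fam = 2%N.
Proof.
case/and3P: cert => _ /allP /(_ (vmod 8 x) (@vmod_mem_residues 8 x isT)) + _ Qx.
rewrite qform_vmod Qx eqxx /= => /eqP cnt.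
by rewrite -[RHS]cnt; apply: eq_count => AC; rewrite ascends_vmod.
Qed.

Lemma count_descends (t : vec3 int) : (Q (oddv t) %% 32)%Z = ((4 * r%:Z) %% 32)%Z ->
  count (fun AC => descends (modz^~ 32) AC.2 t) fam = 1%N.
Proof.
case/and3P: cert => _ _ /allP /(_ (vmod 16 t) (@vmod_mem_residues 16 t isT)) + Qt.
have -> : (Q (oddv (vmod 16 t)) %% 32)%Z = (Q (oddv t) %% 32)%Z.
  by rewrite -qform_vmod vmod_oddv qform_vmod.
rewrite Qt eqxx /= => /eqP cnt.
by rewrite -[RHS]cnt; apply: eq_count => AC; rewrite descends_vmod.
Qed.

Theorem trep_eq_Nrep (n m : nat) : (4 * m = 8 * n + a + b + c)%N -> (m %% 8 = r)%N ->
  trep a b c n = (2 * Nrep a b c m)%N.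
Proof.
move=> mE mr; rewrite (trepE mE) NrepE -[LHS]mul1n.
apply/esym; apply: (double_count (P := fun i => ascends (modz^~ 8) i.1)
  (R := fun i => descends (modz^~ 32) i.2) (f := fun i => ascend i.1) (g := fun i => descend i.2)).
- by rewrite filter_uniq ?uniq_ztriples.
- by rewrite filter_uniq ?uniq_ztriples.
- move=> x; rewrite mem_reps // => /eqP Qx; apply: count_ascends; rewrite Qx; lia.
- move=> t; rewrite (mem_odd_reps _ _ _ _ mE) // => /eqP Qt; apply: count_descends; rewrite Qt; lia.
- move=> i /fam_similitude[simA CA AC] x; rewrite mem_reps // => /eqP Qx.
  case/(ascend_spec simA CA) => Qt desc_x ->; split=> //.
  by rewrite (mem_odd_reps _ _ _ _ mE) // Qt Qx; apply/eqP; lia.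
- move=> i /fam_similitude[simA CA AC] t; rewrite (mem_odd_reps _ _ _ _ mE) // => /eqP Qt.
  case/(descend_spec simA AC) => Qx asc_t ->; split=> //.
  by rewrite mem_reps //=; apply/eqP/(@mulfI _ 4) => //; rewrite Qx Qt; lia.
Qed.

End Transfer.

Lemma Z_of_int_modz (d x : int) :
  0 < d -> Z_of_int (x %% d)%Z = Z.modulo (Z_of_int x) (Z_of_int d).
Proof.
move=> d_gt0; have xE := divz_eq x d.
have r_ge0 := modz_ge0 x (lt0r_neq0 d_gt0); have r_lt := ltz_pmod x d_gt0.
by apply: (Z.mod_unique_pos _ _ (Z_of_int (x %/ d)%Z)); lia.
Qed.

Lemma certificate_Z (a b c r : int) (fam : seq (mat3 int * mat3 int))
    (box8 box16 : seq (vec3 int)) :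
  certificate (modz^~ 8) (modz^~ 32) a b c r fam box8 box16 =
  certificate (fun z => Z.modulo z 8) (fun z => Z.modulo z 32)
    (Z_of_int a) (Z_of_int b) (Z_of_int c) (Z_of_int r)
    [seq (mapm Z_of_int AC.1, mapm Z_of_int AC.2) | AC <- fam]
    (map (map3 Z_of_int) box8) (map (map3 Z_of_int) box16).
Proof.
apply: certificate_map => [x y /(congr1 int_of_Z) | x | x]; first by rewrite !Z_of_intK.
all: exact: Z_of_int_modz.
Qed.

Definition family_1_4_7 : seq (mat3 int * mat3 int) :=
 [:: (((0, -12, -14), (-4, 0, 0), (0, -4, 6)), ((0, -32, 0), (-6, 0, -14), (-4, 0, 12)));
     (((0, -12, -14), (-4, 0, 0), (0, 4, -6)), ((0, -32, 0), (-6, 0, 14), (-4, 0, -12)))].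

Definition family_1_7_12 : seq (mat3 int * mat3 int) :=
 [:: (((-3, -14, -18), (-1, 6, -6), (-2, 0, 4)), ((-6, -14, -48), (-4, 12, 0), (-3, -7, 8)));
     (((-3, -14, -18), (-1, 6, -6), (2, 0, -4)), ((-6, -14, 48), (-4, 12, 0), (-3, -7, -8)));
     (((-3, 14, -18), (1, 6, 6), (-2, 0, 4)), ((-6, 14, -48), (4, 12, 0), (-3, 7, 8)));
     (((-3, 14, -18), (1, 6, 6), (2, 0, -4)), ((-6, 14, 48), (4, 12, 0), (-3, 7, -8)))].

Definition family_1_7_28 : seq (mat3 int * mat3 int) :=
 [:: (((-6, 0, -28), (-2, 0, 12), (0, -4, 0)), ((-12, -28, 0), (0, 0, -32), (-2, 6, 0)));
     (((-6, 0, -28), (2, 0, -12), (0, -4, 0)), ((-12, 28, 0), (0, 0, -32), (-2, -6, 0)))].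

Definition family_3_4_21 : seq (mat3 int * mat3 int) :=
 [:: (((-3, -6, -14), (-6, 4, 0), (-1, -2, 6)), ((-6, -16, -14), (-9, 8, -21), (-4, 0, 12)));
     (((-3, -6, -14), (-6, 4, 0), (1, 2, -6)), ((-6, -16, 14), (-9, 8, 21), (-4, 0, -12)));
     (((-3, -6, 14), (6, -4, 0), (-1, -2, -6)), ((-6, 16, -14), (-9, -8, -21), (4, 0, -12)));
     (((-3, -6, 14), (6, -4, 0), (1, 2, 6)), ((-6, 16, 14), (-9, -8, 21), (4, 0, 12)))].

Definition family_3_21_28 : seq (mat3 int * mat3 int) :=
 [:: (((-6, -7, -14), (-2, 3, 6), (0, -6, 4)), ((-12, -28, 0), (-2, 6, -16), (-3, 9, 8)));
     (((-6, -7, -14), (-2, 3, 6), (0, 6, -4)), ((-12, -28, 0), (-2, 6, 16), (-3, 9, -8)));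
     (((-6, 7, 14), (2, 3, 6), (0, -6, 4)), ((-12, 28, 0), (2, 6, -16), (3, 9, 8)));
     (((-6, 7, 14), (2, 3, 6), (0, 6, -4)), ((-12, 28, 0), (2, 6, 16), (3, 9, -8)))].

Lemma certified_1_4_7 : certified 1 4 7 5 family_1_4_7.
Proof. by rewrite /certified certificate_Z; vm_compute. Qed.

Lemma certified_1_7_12 : certified 1 7 12 3 family_1_7_12.
Proof. by rewrite /certified certificate_Z; vm_compute. Qed.

Lemma certified_1_7_28 : certified 1 7 28 3 family_1_7_28.
Proof. by rewrite /certified certificate_Z; vm_compute. Qed.

Lemma certified_3_4_21 : certified 3 4 21 1 family_3_4_21.
Proof. by rewrite /certified certificate_Z; vm_compute. Qed.

Lemma certified_3_21_28 : certified 3 21 28 7 family_3_21_28.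
Proof. by rewrite /certified certificate_Z; vm_compute. Qed.

Local Close Scope ring_scope.

Theorem theorem5p1 (n : nat) : 0 < n ->
  [/\ (n %% 4 = 1 -> trep 1 4 7 n = 2 * Nrep 1 4 7 (2 * n + 3)),
      (n %% 4 = 3 -> trep 1 7 12 n = 2 * Nrep 1 7 12 (2 * n + 5)),
      (n %% 4 = 1 -> trep 1 7 28 n = 2 * Nrep 1 7 28 (2 * n + 9)),
      (n %% 4 = 1 -> trep 3 4 21 n = 2 * Nrep 3 4 21 (2 * n + 7)) &
      (n %% 4 = 1 -> trep 3 21 28 n = 2 * Nrep 3 21 28 (2 * n + 13))].
Proof.
move=> _; split=> n_mod4.
- by apply: (trep_eq_Nrep _ _ _ certified_1_4_7); lia.
- by apply: (trep_eq_Nrep _ _ _ certified_1_7_12); lia.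
- by apply: (trep_eq_Nrep _ _ _ certified_1_7_28); lia.
- by apply: (trep_eq_Nrep _ _ _ certified_3_4_21); lia.
- by apply: (trep_eq_Nrep _ _ _ certified_3_21_28); lia.
Qed.
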